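(* Let $G$ be a connected graph with $|V(G)|\ge 3$ and $L(G)=2l(G)$. For any maximum matchings $F_L,F_l$ of $G$ with $\nu(G\setminus F_L)=L(G)$ and $\nu(G\setminus F_l)=l(G)$, every vertex of $G$ is covered by an edge of $F_L$ or by an edge of $F_l$, i.e. $V(F_L)\cup V(F_l)=V(G)$.
   Context: Graphs are finite, undirected, without loops or multiple edges. $\nu(G)$ denotes the maximum size of a matching of $G$; a matching is maximum if it has $\nu(G)$ edges. For $F\subseteq E(G)$, $G\setminus F$ is the graph with vertex set $V(G)$ and edge set $E(G)\setminus F$, and $V(F)$ is the set of vertices incident to some edge of $F$. Define $L(G)=\max\{\nu(G\setminus F): F \text{ a maximum matching of } G\}$ and $l(G)=\min\{\nu(G\setminus F): F \text{ a maximum matching of } G\}$. *)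

(* A finite simple graph is a symmetric irreflexive relation
   e on a finType T (vertex set = T). Edges are 2-element vertex sets. *)
From mathcomp Require Import all_boot.
Set Implicit Arguments. Unset Strict Implicit. Unset Printing Implicit Defensive.

Section Matchings.
Variable T : finType.

Definition edges (e : rel T) : {set {set T}} :=
  [set A : {set T} | [exists x, exists y, e x y && (A == [set x; y])]].

Definition is_matching (E M : {set {set T}}) : bool :=
  (M \subset E) && trivIset M.

Definition nu (E : {set {set T}}) : nat :=
  \max_(M : {set {set T}} | is_matching E M) #|M|.

Definition max_matching (e : rel T) (F : {set {set T}}) : bool :=
  is_matching (edges e) F && (#|F| == nu (edges e)).

Definition LL (e : rel T) : nat :=
  \max_(F : {set {set T}} | max_matching e F) nu (edges e :\: F).

(* l(G) = min { nu(G \ F) : F maximum matching of G }; the neutral element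
   nu(G) is harmless since nu(G \ F) <= nu(G) and maximum matchings exist. *)
Definition ll (e : rel T) : nat :=
  \big[minn/nu (edges e)]_(F : {set {set T}} | max_matching e F)
     nu (edges e :\: F).

Definition Vcov (F : {set {set T}}) : {set T} := \bigcup_(A in F) A.

End Matchings.

From mathcomp Require Import all_boot.
Set Implicit Arguments. Unset Strict Implicit. Unset Printing Implicit Defensive.

(* Write E for the edge set of G, l := nu(E \ Fl), so that
   nu(E \ FL) = L(G) = 2 l.  Since |FL| = |Fl|, the edges FL \ Fl and
   Fl \ FL are equally many, and FL \ Fl is a matching of E \ Fl, so
   |Fl \ FL| <= l.  A matching M of E \ FL of size 2 l splits into M \ Fl
   (a matching of E \ Fl, size <= l) and M /\ Fl (inside Fl \ FL), hence
   both parts have size exactly l and M contains all of Fl \ FL.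
   Now let v be covered by neither FL nor Fl.  Every neighbour z of v is
   covered by an edge of Fl \ FL: otherwise vz would augment Fl (in G) or
   FL \ Fl (in G \ Fl).  Take a neighbour u of v, its edge Fu in Fl \ FL,
   and a matching M0 of E \ FL of size 2 l.  If v is covered by M0, its
   M0-edge shares the other end with an edge of Fl \ FL <= M0, hence lies
   in Fl: impossible.  Otherwise M0 - Fu + vu again has size 2 l, so it
   must contain Fu: impossible. *)

Section Matchings.
Variable T : finType.
Implicit Types (E M : {set {set T}}) (A B : {set T}).

Lemma nu_ge E M : is_matching E M -> #|M| <= nu E.
Proof. by move=> mM; apply: (@leq_bigmax_cond _ (is_matching E) (fun M : {set {set T}} => #|M|)). Qed.

(* The matching number is attained (the empty matching always exists). *)
Lemma nu_attained E : exists2 M, is_matching E M & #|M| = nu E.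
Proof.
have ne : 0 < #|[pred M | is_matching E M]|.
  apply/card_gt0P; exists set0; rewrite inE /is_matching sub0set /=.
  by apply/trivIsetP => A B; rewrite inE.
have [M mM cM] := eq_bigmax_cond (fun M : {set {set T}} => #|M|) ne.
by exists M; [move: mM; rewrite inE | rewrite /nu cM].
Qed.

Lemma matching_edge_eq E M A B x :
  is_matching E M -> A \in M -> B \in M -> x \in A -> x \in B -> A = B.
Proof.
case/andP=> _ /trivIsetP tM AM BM xA xB; case: (eqVneq A B) => // nAB.
have := disjoint_setI0 (tM _ _ AM BM nAB).
by move/setP/(_ x); rewrite !inE xA xB.
Qed.

Lemma matching_sub E E' M M' :
  is_matching E M -> M' \subset M -> M' \subset E' -> is_matching E' M'.
Proof. by case/andP=> _ tM sM sE; rewrite /is_matching sE (trivIsetS sM tM). Qed.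

Lemma matching_add E M A :
  set0 \notin E -> is_matching E M -> A \in E ->
  (forall B, B \in M -> [disjoint A & B]) ->
  is_matching E (A |: M) /\ #|A |: M| = #|M|.+1.
Proof.
move=> E0 /andP[sM tM] AE dis.
have M0 : set0 \notin M by apply: contra E0 => /(subsetP sM).
have [tU nAM] := trivIsetU1 dis tM M0.
by rewrite /is_matching tU subUset sub1set AE sM cardsU1 nAM.
Qed.

Lemma maximum_matching_blocks E M A :
  set0 \notin E -> is_matching E M -> #|M| = nu E -> A \in E ->
  ~ (forall B, B \in M -> [disjoint A & B]).
Proof.
move=> E0 mM cM AE dis; have [mAM cAM] := matching_add E0 mM AE dis.
by have := nu_ge mAM; rewrite cAM cM ltnn.
Qed.

Lemma disjoint_pair v u B : v \notin B -> u \notin B -> [disjoint [set v; u] & B].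
Proof.
move=> vB uB; apply/pred0P => z; rewrite !inE.
by case: eqP => [->|_]; [rewrite (negbTE vB) | case: eqP => [->|_]; rewrite ?(negbTE uB)].
Qed.

Lemma cardsD_sym A B : #|A| = #|B| -> #|A :\: B| = #|B :\: A|.
Proof.
move=> cAB; apply/eqP; rewrite -(eqn_add2l #|A :&: B|) cardsID setIC cardsID.
by rewrite cAB.
Qed.

Lemma notin_Vcov F B v : v \notin Vcov F -> B \in F -> v \notin B.
Proof. by move=> vF BF; apply: contra vF => vB; apply/bigcupP; exists B. Qed.

End Matchings.

Section Graph.
Variables (T : finType) (e : rel T).

Lemma edges_set0 : set0 \notin edges e.
Proof.
apply/negP; rewrite inE => /existsP[x /existsP[y /andP[_ /eqP/setP/(_ x)]]].
by rewrite !inE eqxx.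
Qed.

Lemma edgesD_set0 (F : {set {set T}}) : set0 \notin edges e :\: F.
Proof. by rewrite in_setD (negbTE edges_set0) andbF. Qed.

Lemma edge_pair v z : e v z -> [set v; z] \in edges e.
Proof. by move=> ez; rewrite inE; apply/existsP; exists v; apply/existsP; exists z; rewrite ez eqxx. Qed.

Lemma edge_neighbour B v :
  symmetric e -> B \in edges e -> v \in B -> exists2 x, e v x & x \in B.
Proof.
move=> e_sym; rewrite inE => /existsP[x /existsP[y /andP[exy /eqP->]]].
rewrite !inE => /orP[/eqP->|/eqP->].
  by exists y; rewrite // !inE eqxx orbT.
by exists x; rewrite 1?e_sym // !inE eqxx.
Qed.

Lemma exists_neighbour v :
  (forall x y : T, connect e x y) -> 1 < #|T| -> exists u, e v u.
Proof.
move=> e_conn hT; have : 0 < #|[set~ v]| by rewrite cardsC1 -ltnS prednK // ltnW.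
case/card_gt0P => w; rewrite !inE => wv.
case/connectP: (e_conn v w) => [[|z p]] /=; last by case/andP=> evz _ _; exists z.
by move=> _ wE; rewrite wE eqxx in wv.
Qed.

Variables FL Fl : {set {set T}}.
Hypotheses (hFL : max_matching e FL) (hFl : max_matching e Fl).
Let E := edges e.
Let l := nu (E :\: Fl).
Hypothesis hnu : nu (E :\: FL) = 2 * l.

Let mFL : is_matching E FL. Proof. by case/andP: hFL. Qed.
Let mFl : is_matching E Fl. Proof. by case/andP: hFl. Qed.
Let cFl : #|Fl| = nu E. Proof. by case/andP: hFl => _ /eqP. Qed.

Lemma matching_FL_diff : is_matching (E :\: Fl) (FL :\: Fl).
Proof. by apply: (matching_sub mFL (subsetDl _ _)); apply: setSD; case/andP: mFL. Qed.

Lemma card_diff_sym : #|FL :\: Fl| = #|Fl :\: FL|.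
Proof. by apply: cardsD_sym; rewrite cFl; case/andP: hFL => _ /eqP. Qed.

Lemma matching_meet_Fl M : is_matching (E :\: FL) M -> M :&: Fl \subset Fl :\: FL.
Proof.
case/andP=> /subsetP sM _; apply/subsetP=> A; rewrite !inE => /andP[AM ->].
by have := sM A AM; rewrite inE => /andP[->].
Qed.

Lemma large_matching_card M :
  is_matching (E :\: FL) M -> #|M| = 2 * l ->
  #|M :&: Fl| = l /\ #|Fl :\: FL| = l.
Proof.
move=> mM cM.
have sME : M \subset E by case/andP: mM => sM _; apply: subset_trans sM (subsetDl _ _).
have outFl : #|M :\: Fl| <= l by apply/nu_ge/(matching_sub mM (subsetDl _ _))/setSD.
have sI := matching_meet_Fl mM.
have diff_le : #|Fl :\: FL| <= l by rewrite -card_diff_sym; apply/nu_ge/matching_FL_diff.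
have inFl : #|M :&: Fl| <= #|Fl :\: FL| := subset_leq_card sI.
have split_M := cardsID Fl M; rewrite cM in split_M.
have cI : #|M :&: Fl| = l.
  apply/eqP; rewrite eqn_leq (leq_trans inFl diff_le) /=.
  by rewrite -(leq_add2r #|M :\: Fl|) split_M mul2n -addnn leq_add2l.
by split=> //; apply/eqP; rewrite eqn_leq diff_le -{1}cI inFl.
Qed.

Lemma large_matching_contains M :
  is_matching (E :\: FL) M -> #|M| = 2 * l -> Fl :\: FL \subset M.
Proof.
move=> mM cM; have [cI cD] := large_matching_card mM cM.
have sI := matching_meet_Fl mM.
have <- : M :&: Fl = Fl :\: FL by apply/eqP; rewrite eqEcard sI cI cD /=.
exact: subsetIl.
Qed.

Lemma card_Fl_diff : #|Fl :\: FL| = l.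
Proof.
have [M0 mM0 cM0] := nu_attained (E :\: FL).
by rewrite hnu in cM0; case: (large_matching_card mM0 cM0).
Qed.

(* Every neighbour of a vertex uncovered by FL and Fl is covered by Fl \ FL:
   otherwise the edge to it would augment Fl, or FL \ Fl in G \ Fl. *)
Lemma neighbour_covered v z :
  v \notin Vcov FL -> v \notin Vcov Fl -> e v z ->
  exists2 Fz, Fz \in Fl :\: FL & z \in Fz.
Proof.
move=> vFL vFl evz.
have vzFl : [set v; z] \notin Fl by apply/negP => /(notin_Vcov vFl); rewrite setU11.
case: (pickP [pred B in Fl | z \in B]) => [Fz /andP[FzFl zFz] | none].
  case FzFL : (Fz \in FL); last by exists Fz; rewrite // inE FzFL.
  have vzE : [set v; z] \in E :\: Fl by rewrite inE vzFl edge_pair.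
  have cFLd : #|FL :\: Fl| = nu (E :\: Fl) by rewrite card_diff_sym card_Fl_diff.
  case: (maximum_matching_blocks (edgesD_set0 _) matching_FL_diff cFLd vzE).
  move=> B; rewrite inE => /andP[BFl BFL]; apply: disjoint_pair.
    exact: notin_Vcov vFL BFL.
  by apply: contra BFl => zB; rewrite (matching_edge_eq mFL BFL FzFL zB zFz).
case: (maximum_matching_blocks edges_set0 mFl cFl (edge_pair evz)).
move=> B BFl; apply: disjoint_pair; first exact: notin_Vcov vFl BFl.
by apply: contraFN (none B) => zB; rewrite /= BFl.
Qed.

Lemma uncovered_isolated v u :
  symmetric e -> v \notin Vcov FL -> v \notin Vcov Fl -> ~ e v u.
Proof.
move=> e_sym vFL vFl evu.
have [Fu FuD uFu] := neighbour_covered vFL vFl evu.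
have FuFl : Fu \in Fl by move: FuD; rewrite inE => /andP[].
have [M0 mM0 cM0] := nu_attained (E :\: FL); rewrite hnu in cM0.
have DM0 := subsetP (large_matching_contains mM0 cM0).
case: (pickP [pred B in M0 | v \in B]) => [B /andP[BM0 vB] | none].
  (* v covered by B in M0: B coincides with the Fl-edge at its other end *)
  have BE : B \in E by case/andP: mM0 => /subsetP/(_ B BM0); rewrite inE => /andP[].
  have [x evx xB] := edge_neighbour e_sym BE vB.
  have [Fx FxD xFx] := neighbour_covered vFL vFl evx.
  rewrite (matching_edge_eq mM0 BM0 (DM0 _ FxD) xB xFx) in vB.
  by move: FxD; rewrite inE => /andP[_ /(notin_Vcov vFl)]; rewrite vB.
(* v uncovered by M0: exchanging Fu for vu keeps size 2 l but loses Fu *)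
have mD : is_matching (E :\: FL) (M0 :\ Fu).
  apply: (matching_sub mM0 (subsetDl _ _)).
  by case/andP: mM0 => sM _; apply: subset_trans (subsetDl _ _) sM.
have vuE : [set v; u] \in E :\: FL.
  by rewrite inE edge_pair // andbT; apply/negP => /(notin_Vcov vFL); rewrite setU11.
have vu_free : forall B, B \in M0 :\ Fu -> [disjoint [set v; u] & B].
  move=> B; rewrite !inE => /andP[BFu BM0]; apply: disjoint_pair.
    by apply: contraFN (none B) => vB; rewrite /= BM0 vB.
  by apply: contra BFu => uB; rewrite (matching_edge_eq mM0 BM0 (DM0 _ FuD) uB uFu).
have [mM cM] := matching_add (edgesD_set0 _) mD vuE vu_free.
have cM2 : #|[set v; u] |: (M0 :\ Fu)| = 2 * l.
  by rewrite cM -cM0 [in RHS](cardsD1 Fu M0) DM0.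
have := subsetP (large_matching_contains mM cM2) _ FuD.
rewrite in_setU1 in_setD1 eqxx /= orbF => /eqP FuE.
by move: (notin_Vcov vFl FuFl); rewrite FuE setU11.
Qed.

End Graph.

Theorem claim1 (T : finType) (e : rel T)
  (e_sym : symmetric e) (e_irr : irreflexive e)
  (e_conn : forall x y : T, connect e x y)
  (hV : 3 <= #|T|)
  (hL : LL e = 2 * ll e)
  (FL Fl : {set {set T}})
  (hFL : max_matching e FL) (hFl : max_matching e Fl)
  (hFLv : nu (edges e :\: FL) = LL e)
  (hFlv : nu (edges e :\: Fl) = ll e) :
  Vcov FL :|: Vcov Fl = [set: T].
Proof.
have hnu : nu (edges e :\: FL) = 2 * nu (edges e :\: Fl) by rewrite hFLv hFlv.
apply/setP => v; rewrite in_setT in_setU; apply/negPn/negP.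
rewrite negb_or => /andP[vFL vFl].
have [u evu] := exists_neighbour v e_conn (ltnW hV).
exact: uncovered_isolated hFL hFl hnu v u e_sym vFL vFl evu.
Qed.
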